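(* Let $\Theta$, $\mathtt{info}_K$, $\mathtt{good}_K$ and $\mathtt{max}_K$ (for $K\subseteq I$) be as in the context. For every model $\mathcal{M}=\langle W,V\rangle$, $w\in W$ and $X\subseteq W$: (1) for every $L\subseteq I$, if $\mathcal{M},w,X\vDash\mathtt{good}_L$ then $\llbracket\mathtt{info}_L\rrbracket^{\mathcal{M},X}$ is a $\Theta$-subset of $X$; (2) if $Y$ is a maximal $\Theta$-subset of $X$, then there is $K\subseteq I$ such that $Y=\llbracket\mathtt{info}_K\rrbracket^{\mathcal{M},X}$ and $\mathcal{M},w,X\vDash\mathtt{max}_K$; (3) for every $L\subseteq I$, if $\mathcal{M},w,X\vDash\mathtt{max}_L$ then $\llbracket\mathtt{info}_L\rrbracket^{\mathcal{M},X}$ is a maximal $\Theta$-subset of $X$.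
   Context: Formulas of the modal language $\mathcal{L}$: $\varphi::=p\mid\neg\varphi\mid(\varphi\wedge\varphi)\mid\Box\varphi$ with $\vee,\to$ as usual and $\Diamond\varphi:=\neg\Box\neg\varphi$; nonmodal formulas are those without $\Box$. A model is $\mathcal{M}=\langle W,V\rangle$, $W$ nonempty, $V(p)\subseteq W$. For $w\in W$, $X\subseteq W$: $\mathcal{M},w,X\vDash p$ iff $w\in V(p)$; $\neg,\wedge$ Boolean; $\mathcal{M},w,X\vDash\Box\varphi$ iff $\mathcal{M},v,X\vDash\varphi$ for all $v\in X$. $\llbracket\varphi\rrbracket^{\mathcal{M},Y}=\{v\in Y\mid\mathcal{M},v,Y\vDash\varphi\}$. Fix $\Theta=\bigvee_{i\in I}\theta_i$ with $I$ finite and $\theta_i=\varphi_i\wedge\Box\psi_i\wedge\bigwedge_{n\in D_i}\Diamond\chi_n$, where all $\varphi_i,\psi_i,\chi_n$ are nonmodal and each $D_i$ is a finite index set. For $K\subseteq I$: $\mathtt{info}_K:=(\bigvee_{k\in K}\varphi_k)\wedge\bigwedge_{k\in K}\psi_k$; $\mathtt{good}_K:=\bigwedge_{k\in K}\bigwedge_{n\in D_k}\Diamond(\mathtt{info}_K\wedge\chi_n)$; $\mathtt{max}_K:=\mathtt{good}_K\wedge\bigwedge_{L\subseteq I}\big((\Box(\mathtt{info}_K\to\mathtt{info}_L)\wedge\Diamond(\neg\mathtt{info}_K\wedge\mathtt{info}_L))\to\neg\mathtt{good}_L\big)$ (empty disjunction is $\bot$, empty conjunction is $\top$). A set $Y\subseteq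 X$ is a $\Theta$-subset of $X$ if $Y\subseteq\llbracket\Theta\rrbracket^{\mathcal{M},Y}$; it is a maximal $\Theta$-subset if no $\Theta$-subset $Z$ of $X$ satisfies $Y\subsetneq Z$. *)

From mathcomp Require Import all_boot.
Set Implicit Arguments. Unset Strict Implicit. Unset Printing Implicit Defensive.

Inductive form : Type :=
| Var : nat -> form
| Neg : form -> form
| And : form -> form -> form
| Box : form -> form.

Definition Or (a b : form) : form := Neg (And (Neg a) (Neg b)).
Definition Imp (a b : form) : form := Or (Neg a) b.
Definition Dia (a : form) : form := Neg (Box (Neg a)).
Definition Bot : form := And (Var 0) (Neg (Var 0)).
Definition Top : form := Neg Bot.

Definition BigAnd (s : seq form) : form := foldr And Top s.
Definition BigOr (s : seq form) : form := foldr Or Bot s.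

Fixpoint nonmodal (f : form) : Prop :=
  match f with
  | Var _ => True
  | Neg a => nonmodal a
  | And a b => nonmodal a /\ nonmodal b
  | Box _ => False
  end.

Fixpoint sat (W : Type) (V : nat -> W -> Prop) (w : W) (X : W -> Prop) (f : form) : Prop :=
  match f with
  | Var p => V p w
  | Neg a => ~ sat V w X a
  | And a b => sat V w X a /\ sat V w X b
  | Box a => forall v, X v -> sat V v X a
  end.

(* [[f]]^{M,Y} = { v in Y | M, v, Y |= f } *)
Definition ext (W : Type) (V : nat -> W -> Prop) (f : form) (Y : W -> Prop) : W -> Prop :=
  fun v => Y v /\ sat V v Y f.

Definition subset_of (W : Type) (A B : W -> Prop) : Prop := forall v, A v -> B v.
Definition set_equal (W : Type) (A B : W -> Prop) : Prop := forall v, A v <-> B v.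

Section Theta.
(* Theta = \/_{i in I} (phi_i /\ Box psi_i /\ /\_{n in D_i} Dia chi_n);
   the family (chi_n)_{n in D_i} is given as the finite list chi i. *)
Variables (I : finType) (phi psi : I -> form) (chi : I -> seq form).

Definition theta (i : I) : form :=
  And (phi i) (And (Box (psi i)) (BigAnd [seq Dia c | c <- chi i])).

Definition Theta : form := BigOr [seq theta i | i <- enum I].

Definition info (K : {set I}) : form :=
  And (BigOr [seq phi k | k <- enum K]) (BigAnd [seq psi k | k <- enum K]).

Definition good (K : {set I}) : form :=
  BigAnd [seq BigAnd [seq Dia (And (info K) c) | c <- chi k] | k <- enum K].

Definition maxf (K : {set I}) : form :=
  And (good K)
      (BigAnd [seq Imp (And (Box (Imp (info K) (info L)))
                            (Dia (And (Neg (info K)) (info L))))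
                       (Neg (good L)) | L <- enum {: {set I}}]).

Definition Theta_subset (W : Type) (V : nat -> W -> Prop) (X Y : W -> Prop) : Prop :=
  subset_of Y X /\ subset_of Y (ext V Theta Y).

Definition max_Theta_subset (W : Type) (V : nat -> W -> Prop) (X Y : W -> Prop) : Prop :=
  Theta_subset V X Y /\
  ~ (exists Z : W -> Prop, Theta_subset V X Z /\ subset_of Y Z /\ ~ subset_of Z Y).
End Theta.

(* membership in a list of formulas (Prop-valued, form has no eqType instance) *)
Fixpoint in_list (c : form) (s : seq form) : Prop :=
  match s with [::] => False | d :: s' => d = c \/ in_list c s' end.

(* Since the phi_i, psi_i and chi_n are nonmodal, their truth at a world does not
   depend on the set parameter.  A Theta-subset Z of X determines the set K of
   indices k such that psi_k holds throughout Z and every chi_n, n in D_k, is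
   witnessed in Z; then Z lies inside [[info_K]]^X and good_K holds at X.
   Conversely good_L makes [[info_L]]^X a Theta-subset.  Hence the maximal
   Theta-subsets are exactly the sets [[info_K]]^X with good_K that are not
   properly extended by any [[info_L]]^X with good_L, which is what max_K
   expresses. *)
From Stdlib Require List.
From mathcomp Require Import all_boot boolp.

Set Implicit Arguments.
Unset Strict Implicit.
Unset Printing Implicit Defensive.

Lemma in_list_In (c : form) (s : seq form) : in_list c s <-> List.In c s.
Proof. by elim: s => //= d s ->. Qed.

Lemma In_mem (T : eqType) (x : T) (s : seq T) : List.In x s <-> x \in s.
Proof.
elim: s => //= y s IH; rewrite in_cons.
by split=> [[->|/IH->]|/orP[/eqP->|/IH]]; rewrite ?eqxx ?orbT; auto.
Qed.

Lemma In_enum (T : finType) (A : {pred T}) x : List.In x (enum A) <-> x \in A.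
Proof. by rewrite In_mem mem_enum. Qed.

Lemma not_subset_ofP (T : Type) (A B : T -> Prop) :
  ~ subset_of A B <-> exists2 u, A u & ~ B u.
Proof.
split=> [nAB | [u Au nBu] AB]; last exact/nBu/AB.
by apply: contrapT => noU; apply: nAB => u Au; apply: contrapT => nBu; apply: noU; exists u.
Qed.

Section Semantics.

Variables (W : Type) (V : nat -> W -> Prop).

Lemma sat_nonmodal (f : form) : nonmodal f ->
  forall v (X Y : W -> Prop), sat V v X f -> sat V v Y f.
Proof.
elim: f => [n|a IH|a IHa b IHb|a IH] //= nm_f v X Y.
- by move=> nXa /(IH nm_f v Y X).
- by case: nm_f => nm_a nm_b [Xa Xb]; split; [apply: IHa Xa | apply: IHb Xb].
Qed.

Lemma sat_And v X a b : sat V v X (And a b) <-> sat V v X a /\ sat V v X b.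
Proof. by []. Qed.

Lemma sat_Or v X a b : sat V v X (Or a b) <-> sat V v X a \/ sat V v X b.
Proof. by rewrite /= not_andE !not_notE. Qed.

Lemma sat_Imp v X a b : sat V v X (Imp a b) <-> (sat V v X a -> sat V v X b).
Proof.
rewrite sat_Or; split=> [[na /na|] //|ab].
by have [/ab|] := pselect (sat V v X a); [right|left].
Qed.

Lemma sat_Dia v X a : sat V v X (Dia a) <-> exists2 u, X u & sat V u X a.
Proof.
split=> [nX | [u Xu au] /(_ u Xu)//].
by apply: contrapT => noX; apply: nX => u Xu au; apply: noX; exists u.
Qed.

Lemma sat_BigAnd_map (T : Type) (g : T -> form) (s : seq T) v X :
  sat V v X (BigAnd (map g s)) <-> forall x, List.In x s -> sat V v X (g x).
Proof.
elim: s => [|a s IH] /=; first by split=> // _ [].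
rewrite IH; split=> [[ga gs] x [<- // | /gs //] | gs].
by split=> [|x sx]; apply: gs; [left | right].
Qed.

Lemma sat_BigOr_map (T : Type) (g : T -> form) (s : seq T) v X :
  sat V v X (BigOr (map g s)) <-> exists2 x, List.In x s & sat V v X (g x).
Proof.
elim: s => [|a s IH]; first by split=> [/= []|[]]; [tauto|].
rewrite [BigOr _]/= sat_Or IH.
split=> [[ga | [x sx gx]] | [x [<- | sx] gx]].
- by exists a; [left |].
- by exists x; [right |].
- by left.
- by right; exists x.
Qed.

End Semantics.

Section ThetaSubsets.

Variables (I : finType) (phi psi : I -> form) (chi : I -> seq form).
Variables (W : Type) (V : nat -> W -> Prop).
Hypotheses (Hphi : forall i, nonmodal (phi i)) (Hpsi : forall i, nonmodal (psi i)).
Hypothesis Hchi : forall i c, in_list c (chi i) -> nonmodal c.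

Local Notation info := (info phi psi).
Local Notation good := (good phi psi chi).
Local Notation maxf := (maxf phi psi chi).
Local Notation Theta_subset := (Theta_subset phi psi chi V).
Local Notation max_Theta_subset := (max_Theta_subset phi psi chi V).

Lemma sat_info v Y K : sat V v Y (info K) <->
  (exists2 k, k \in K & sat V v Y (phi k)) /\ {in K, forall k, sat V v Y (psi k)}.
Proof.
rewrite /info [sat _ _ _ _]/= sat_BigOr_map sat_BigAnd_map.
split=> [[[k /In_enum Kk phik] psiK] | [[k Kk phik] psiK]].
  by split=> [|k' /In_enum /psiK //]; exists k.
by split=> [|k' /In_enum /psiK //]; exists k; rewrite ?In_enum.
Qed.

Lemma sat_good w X K : sat V w X (good K) <->
  forall k c, k \in K -> in_list c (chi k) ->
    exists2 u, ext V (info K) X u & sat V u X c.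
Proof.
rewrite /good sat_BigAnd_map.
split=> [goodK k c /In_enum /goodK /sat_BigAnd_map goodk /in_list_In /goodk
        | goodK k /In_enum Kk].
  by case/sat_Dia=> u Xu [infou cu]; exists u.
apply/sat_BigAnd_map => c /in_list_In chi_c; apply/sat_Dia.
by have [u [Xu infou] cu] := goodK k c Kk chi_c; exists u.
Qed.

Lemma sat_Theta v Y : sat V v Y (Theta phi psi chi) <->
  exists i, [/\ sat V v Y (phi i), forall u, Y u -> sat V u Y (psi i)
               & forall c, in_list c (chi i) -> exists2 u, Y u & sat V u Y c].
Proof.
rewrite /Theta sat_BigOr_map; split=> [[i _ [phii [psii chii]]] | [i [phii psii chii]]].
  exists i; split=> // c /in_list_In chi_c.
  by move: chii => /(sat_BigAnd_map V Dia) /(_ c chi_c) /sat_Dia.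
exists i; first exact/In_enum.
split=> //; split=> //; apply/(sat_BigAnd_map V Dia) => c /in_list_In chi_c.
exact/sat_Dia/chii.
Qed.

Lemma sat_maxf w X K : sat V w X (maxf K) <->
  sat V w X (good K) /\
  forall L, subset_of (ext V (info K) X) (ext V (info L) X) ->
    ~ subset_of (ext V (info L) X) (ext V (info K) X) -> ~ sat V w X (good L).
Proof.
rewrite /maxf [sat _ _ _ (And _ _)]/= sat_BigAnd_map.
split=> [[goodK maxK] | [goodK maxK]]; split=> // L.
  move=> KL /not_subset_ofP [u [Xu infoLu] ninfoKu].
  have inL : List.In L (enum {: {set I}}) by apply/In_enum.
  have /sat_Imp impL := maxK L inL; apply: impL; split.
    by move=> v Xv; apply/sat_Imp => infoKv; case: (KL v (conj Xv infoKv)).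
  by apply/sat_Dia; exists u => //; split=> // infoKu; apply: ninfoKu.
move=> _; apply/sat_Imp => /sat_And [boxKL /sat_Dia [u Xu /sat_And [ninfoKu infoLu]]].
apply: maxK => [v [Xv infoKv] | ].
  by split=> //; apply: iffLR (sat_Imp V v X (info K) (info L)) (boxKL v Xv) infoKv.
by apply/not_subset_ofP; exists u => // -[].
Qed.

Lemma good_Theta_subset w X L :
  sat V w X (good L) -> Theta_subset X (ext V (info L) X).
Proof.
move=> /sat_good goodL; split=> [v [] // | v [Xv infov]]; split=> //.
have /sat_info [[k Kk phik] _] := infov.
apply/sat_Theta; exists k; split.
- exact: sat_nonmodal (Hphi k) _ _ _ phik.
- by move=> u [Xu /sat_info [_ /(_ k Kk) psik]]; apply: sat_nonmodal (Hpsi k) _ _ _ psik.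
- move=> c chi_c; have [u infou cu] := goodL k c Kk chi_c.
  by exists u => //; apply: sat_nonmodal (Hchi chi_c) _ _ _ cu.
Qed.

Lemma Theta_subset_sub_good_info w X Z : Theta_subset X Z ->
  exists2 K, subset_of Z (ext V (info K) X) & sat V w X (good K).
Proof.
move=> [ZX ZTheta].
pose P k := (forall u, Z u -> sat V u X (psi k)) /\
            (forall c, in_list c (chi k) -> exists2 u, Z u & sat V u X c).
pose K := [set k | `[< P k >]].
have inK k : k \in K <-> P k by rewrite inE; split=> /asboolP.
have ZK : subset_of Z (ext V (info K) X).
  move=> v Zv; split; first exact: ZX.
  have [_ /sat_Theta [i [phii psii chii]]] := ZTheta v Zv.
  apply/sat_info; split=> [|k /inK [psik _]]; last exact: psik.
  exists i; last exact: sat_nonmodal (Hphi i) _ _ _ phii.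
  apply/inK; split=> [u Zu | c chi_c].
    exact: sat_nonmodal (Hpsi i) _ _ _ (psii u Zu).
  have [u Zu cu] := chii c chi_c.
  by exists u => //; apply: sat_nonmodal (Hchi chi_c) _ _ _ cu.
exists K => //; apply/sat_good => k c /inK [_ chik] /chik [u Zu cu].
by exists u => //; apply: ZK.
Qed.

Lemma max_Theta_subset_eq_info w X Y : max_Theta_subset X Y ->
  exists K, set_equal Y (ext V (info K) X) /\ sat V w X (maxf K).
Proof.
move=> [thetaY maxY].
have [K YK goodK] := Theta_subset_sub_good_info w thetaY.
have maximal L : sat V w X (good L) ->
    subset_of Y (ext V (info L) X) -> subset_of (ext V (info L) X) Y.
  move=> goodL YL; apply: contrapT => nLY; apply: maxY.
  by exists (ext V (info L) X); split; first exact: good_Theta_subset goodL.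
have KY := maximal K goodK YK.
exists K; split; first by move=> v; split=> [/YK | /KY].
apply/sat_maxf; split=> // L KL nLK goodL; apply: nLK => v.
by move/(maximal L goodL (fun u Yu => KL u (YK u Yu))); apply: YK.
Qed.

Lemma maxf_max_Theta_subset w X L :
  sat V w X (maxf L) -> max_Theta_subset X (ext V (info L) X).
Proof.
move=> /sat_maxf [goodL maxL]; split; first exact: good_Theta_subset goodL.
move=> [Z [thetaZ [LZ nZL]]].
have [K ZK goodK] := Theta_subset_sub_good_info w thetaZ.
apply: (maxL K) goodK => [u /LZ /ZK // | KL].
by apply: nZL => u /ZK /KL.
Qed.

End ThetaSubsets.

Theorem lemma13 (I : finType) (phi psi : I -> form) (chi : I -> seq form)
  (Hphi : forall i, nonmodal (phi i)) (Hpsi : forall i, nonmodal (psi i))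
  (Hchi : forall i c, in_list c (chi i) -> nonmodal c)
  (W : Type) (V : nat -> W -> Prop) (w : W) (X : W -> Prop) :
  (forall L : {set I}, sat V w X (good phi psi chi L) ->
      Theta_subset phi psi chi V X (ext V (info phi psi L) X)) /\
  (forall Y : W -> Prop, max_Theta_subset phi psi chi V X Y ->
      exists K : {set I}, set_equal Y (ext V (info phi psi K) X) /\
                          sat V w X (maxf phi psi chi K)) /\
  (forall L : {set I}, sat V w X (maxf phi psi chi L) ->
      max_Theta_subset phi psi chi V X (ext V (info phi psi L) X)).
Proof.
split; first by move=> L; apply: good_Theta_subset.
split; first by move=> Y; apply: max_Theta_subset_eq_info.
by move=> L; apply: maxf_max_Theta_subset.
Qed.
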